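(* Let $T,L,n\in\mathbb{N}$. Consider discrete-time LIF-SNNs with latency $T$, $L$ hidden layers, input dimension $n$ and width $n$ in every hidden layer. Then there exists a choice of the parameters $\big(W^\ell,b^\ell,u^\ell(0),\beta^\ell,\vartheta^\ell\big)_{\ell\in[L]}$ such that for every initial spike sequence $s^0=(s^0(t))_{t\in[T]}\in\{0,1\}^{n\times T}$ the spike sequence of the last hidden layer satisfies $(s^L(t))_{t\in[T]}=s^0$.
   Context: A discrete-time LIF-SNN with $L$ hidden layers of widths $n_1,\dots,n_L$, input dimension $n_0$ and latency $T\in\mathbb{N}$ has parameters: weight matrices $W^\ell\in\mathbb{R}^{n_\ell\times n_{\ell-1}}$, bias vectors $b^\ell\in\mathbb{R}^{n_\ell}$, initial membrane potentials $u^\ell(0)\in\mathbb{R}^{n_\ell}$, leak parameters $\beta^\ell\in[0,1]$ and thresholds $\vartheta^\ell\in(0,\infty)$, $\ell\in[L]$. Given initial spike activations $(s^0(t))_{t\in[T]}$ with $s^0(t)\in\mathbb{R}^{n_0}$, the spike vectors $s^\ell(t)\in\{0,1\}^{n_\ell}$ and membrane potentials $u^\ell(t)\in\mathbb{R}^{n_\ell}$ are defined recursively for $\ell\in[L]$, $t\in[T]$ by $s^\ell(t)=H\big(\beta^\ell u^\ell(t-1)+W^\ell s^{\ell-1}(t)+b^\ell-\vartheta^\ell\mathbf{1}_{n_\ell}\big)$ and $u^\ell(t)=\beta^\ell u^\ell(t-1)+W^\ell s^{\ell-1}(t)+b^\ell-\vartheta^\ell s^\ell(t)$, where $H$ is the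 Heaviside function applied entrywise ($H(z)=1$ if $z\ge 0$, $H(z)=0$ otherwise) and $\mathbf{1}_{n_\ell}$ is the all-ones vector. *)

From mathcomp Require Import all_boot all_order all_algebra.
From mathcomp Require Import reals.
Set Implicit Arguments. Unset Strict Implicit. Unset Printing Implicit Defensive.
Import Order.TTheory GRing.Theory Num.Theory.
Local Open Scope ring_scope.

Definition heaviside {R : realType} (z : R) : R := if 0 <= z then 1 else 0.

Record lif_layer (R : realType) (m n : nat) := LifLayer {
  W : 'M[R]_(n, m);
  b : 'cV[R]_n;
  u0 : 'cV[R]_n;
  beta : R;
  theta : R
}.

Definition lif_layer_ok {R : realType} {m n : nat} (p : lif_layer R m n) : Prop :=
  0 <= beta p <= 1 /\ 0 < theta p.

(* One layer applied to an input spike sequence (indexed by t, used for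
   t = 1..T).  Returns (membrane potential u(t), spike s(t)) for t >= 0;
   at t = 0 the state is (u(0), 0) (s(0) is never used). *)
Fixpoint lif_run {R : realType} {m n : nat} (p : lif_layer R m n)
  (sin : nat -> 'cV[R]_m) (t : nat) : 'cV[R]_n * 'cV[R]_n :=
  match t with
  | O => (u0 p, 0)
  | t'.+1 =>
      let u_prev := (lif_run p sin t').1 in
      let pre := beta p *: u_prev + W p *m sin t + b p in
      let s := \col_i heaviside (pre i 0 - theta p) in
      (pre - theta p *: s, s)
  end.

Definition lif_spikes {R : realType} {m n : nat} (p : lif_layer R m n)
  (sin : nat -> 'cV[R]_m) : nat -> 'cV[R]_n :=
  fun t => (lif_run p sin t).2.

(* Parameters: P : 'I_L -> layer; hidden layer l (1 <= l <= L) has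
   parameters P (l-1).  snn_layer_spikes P s0 l = spike sequence of
   hidden layer l (l = 0 gives the input s0); only l <= L is meaningful. *)
Fixpoint snn_layer_spikes {R : realType} {n L : nat}
  (P : 'I_L -> lif_layer R n n) (s0 : nat -> 'cV[R]_n) (l : nat) :
  nat -> 'cV[R]_n :=
  match l with
  | O => s0
  | l'.+1 =>
      match insub l' with
      | Some k => lif_spikes (P k) (snn_layer_spikes P s0 l')
      | None => snn_layer_spikes P s0 l'
      end
  end.

Definition snn_output {R : realType} {n L : nat}
  (P : 'I_L -> lif_layer R n n) (s0 : nat -> 'cV[R]_n) : nat -> 'cV[R]_n :=
  snn_layer_spikes P s0 L.

Definition is_binary {R : realType} {n : nat} (v : 'cV[R]_n) : Prop :=
  forall i, v i 0 = 0 \/ v i 0 = 1.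

(* With leak beta = 0 (the membrane forgets its past), identity weights, zero
   bias and threshold 1, a layer's pre-activation at time t is exactly its
   input spike vector s(t), and H(s - 1) = s for s in {0, 1}.  Every such layer
   therefore copies its input, and so does a stack of L of them. *)
From mathcomp Require Import all_boot all_order all_algebra.
From mathcomp Require Import reals.
Import Order.TTheory GRing.Theory Num.Theory.
Local Open Scope ring_scope.

Section CopyLayer.
Variables (R : realType) (n : nat).

Definition copy_layer : lif_layer R n n := LifLayer 1%:M 0 0 0 1.

Lemma copy_layer_ok : lif_layer_ok copy_layer.
Proof. by rewrite /lif_layer_ok /= lexx ler01 ltr01. Qed.

Lemma heaviside_subr1_binary (x : R) : x = 0 \/ x = 1 -> heaviside (x - 1) = x.
Proof. by rewrite /heaviside subr_ge0; case=> ->; rewrite ?ler10 ?lexx. Qed.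

Lemma copy_layer_spikes (sin : nat -> 'cV[R]_n) t :
  is_binary (sin t.+1) -> lif_spikes copy_layer sin t.+1 = sin t.+1.
Proof.
move=> sin_bin; apply/matrixP => i j; rewrite (ord1 j) /lif_spikes /=.
by rewrite scale0r mul1mx add0r addr0 !mxE heaviside_subr1_binary.
Qed.

End CopyLayer.

Lemma snn_layer_spikes_fixed (R : realType) (n L : nat)
    (P : 'I_L -> lif_layer R n n) (s0 : nat -> 'cV[R]_n) t :
  (forall k (sin : nat -> 'cV[R]_n),
     is_binary (sin t) -> lif_spikes (P k) sin t = sin t) ->
  is_binary (s0 t) -> forall l, snn_layer_spikes P s0 l t = s0 t.
Proof.
move=> P_fix s0_bin; elim=> [//|l IHl] /=.
by case: insubP => [k _ _|_]; rewrite ?P_fix IHl.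
Qed.

Theorem proposition3p1 (R : realType) (T L n : nat) :
  exists P : 'I_L -> lif_layer R n n,
    (forall l, lif_layer_ok (P l)) /\
    forall s0 : nat -> 'cV[R]_n,
      (forall t, (1 <= t <= T)%N -> is_binary (s0 t)) ->
      forall t, (1 <= t <= T)%N ->
        snn_output P s0 t = s0 t.
Proof.
exists (fun _ => copy_layer R n); split=> [l|s0 s0_bin [//|t] t_range].
  exact: copy_layer_ok.
apply: snn_layer_spikes_fixed; last exact: s0_bin.
by move=> _ sin; apply: copy_layer_spikes.
Qed.
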